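(* There is a constant $C$ such that for every $n\ge 1$ and every non-constant symmetric total Boolean function $f:\{0,1\}^n\rightarrow\{0,1\}$ (i.e. $f(x)$ depends only on the Hamming weight $|x|$), $WUQ(f)\ge \frac{1}{2}\log n-C$.
   Context: A quantum query algorithm alternates input-independent unitaries with the oracle $O_x:|i,b,z\rangle\mapsto|i,b\oplus x_i,z\rangle$ and measures an output bit. For an algorithm whose minimum over inputs of the probability of outputting $f(x)$ is $p>1/2$, its bias is $\beta=p-1/2$ and its weakly unbounded cost is (number of queries) $+\log(1/(2\beta))$; $WUQ(f)$ is the minimum weakly unbounded cost over quantum query algorithms. $\log$ is base 2. *)

From HB Require Import structures.
From mathcomp Require Import all_boot all_order all_algebra.
From mathcomp Require Import all_classical all_reals all_analysis.
From mathcomp.real_closed Require Import complex.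
Set Implicit Arguments. Unset Strict Implicit. Unset Printing Implicit Defensive.
Import Order.TTheory GRing.Theory Num.Theory.
Local Open Scope ring_scope.

Section QueryModel.
Variable R : realType.

Definition log2 (x : R) : R := ln x / ln 2.

(* Computational basis of the register |i, b, z> : query index i < n,
   answer bit b, workspace z < m. *)
Definition Idx (n m : nat) := ('I_n * bool * 'I_m)%type.

Definition state n m := Idx n m -> R[i].
Definition op n m := Idx n m -> Idx n m -> R[i].

Definition apply_op n m (U : op n m) (v : state n m) : state n m :=
  fun a => \sum_(c : Idx n m) U a c * v c.

Definition cconj (z : R[i]) : R[i] := @Complex R (@complex.Re R z) (- @complex.Im R z).

Definition unitary n m (U : op n m) : Prop :=
  forall a b : Idx n m, \sum_(c : Idx n m) cconj (U c a) * U c b = (a == b)%:R.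

Definition oracle n m (x : {ffun 'I_n -> bool}) (v : state n m) : state n m :=
  fun a => let: (i, b, z) := a in v (i, xorb b (x i), z).

Definition init_state n m : state n m :=
  fun a => let: (i, b, z) := a in
    if [&& (val i == 0)%N, ~~ b & (val z == 0)%N] then 1 else 0.

(* A quantum query algorithm on n input bits: workspace dimension ws,
   number of queries nq, unitaries U 0, ..., U nq, and the final measurement
   in the computational basis, outputting 1 iff the outcome lies in outS. *)
Record qalg (n : nat) := QAlg {
  ws : nat;
  nq : nat;
  U : nat -> op n ws;
  outS : {set Idx n ws}
}.
Arguments U [n] q k _ _.
Arguments outS [n] q.

Definition valid_qalg n (A : qalg n) : Prop :=
  (0 < ws A)%N /\ forall k, (k <= nq A)%N -> unitary (U A k).

Unset Implicit Arguments.
Fixpoint run n (A : qalg n) (x : {ffun 'I_n -> bool}) (k : nat) : state n (ws A) :=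
  match k with
  | 0 => @apply_op n (ws A) (U A 0) (@init_state n (ws A))
  | k'.+1 => @apply_op n (ws A) (U A k) (@oracle n (ws A) x (run n A x k'))
  end.
Set Implicit Arguments.
Arguments run [n] A x k.

Definition final_state n (A : qalg n) x := run A x (nq A).
Arguments final_state [n] A x _.

Definition normsq (z : R[i]) : R := @complex.Re R z ^+ 2 + @complex.Im R z ^+ 2.

Definition prob_out n (A : qalg n) (x : {ffun 'I_n -> bool}) (b : bool) : R :=
  \sum_(a : Idx n (ws A) | (a \in outS A) == b) normsq (final_state A x a).

Definition is_bias n (A : qalg n) (f : {ffun 'I_n -> bool} -> bool) (beta : R) : Prop :=
  (forall x, 1 / 2 + beta <= prob_out A x (f x)) /\
  (exists x, prob_out A x (f x) = 1 / 2 + beta).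

Definition wu_cost n (A : qalg n) (beta : R) : R :=
  (nq A)%:R + log2 (1 / (2 * beta)).

End QueryModel.

Definition hamming_weight n (x : {ffun 'I_n -> bool}) : nat := #|[pred i | x i]|.

Definition symmetric_fun n (f : {ffun 'I_n -> bool} -> bool) : Prop :=
  forall x y, hamming_weight x = hamming_weight y -> f x = f y.

From HB Require Import structures.
From mathcomp Require Import all_boot all_order all_algebra.
From mathcomp Require Import all_classical all_reals all_analysis.
From mathcomp.real_closed Require Import complex.
From mathcomp Require Import ring lra zify.
Set Implicit Arguments. Unset Strict Implicit. Unset Printing Implicit Defensive.
Import Order.TTheory GRing.Theory Num.Theory.
Local Open Scope ring_scope.

(* A hybrid argument: if x and y differ only at index i, the final states of the
   algorithm on x and on y are at distance at most 2 sum_s |P_i psi_s|, where psi_s is the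
   state of the run on y before query s and P_i projects onto query index i.  A bias beta
   forces that distance to be at least beta whenever f x <> f y.  As sum_i |P_i psi_s|^2 = 1,
   Cauchy-Schwarz gives beta |J| <= 2 T sqrt|J| for any set J of indices sensitive at y.
   A non-constant symmetric function has an input next to a jump of f whose sensitive set
   has at least n/2 elements, hence beta^2 n <= 8 T^2 and, taking logarithms, C = 3. *)

Section Amplitudes.
Variable R : realType.
Implicit Types (p q z : R[i]).

Definition re_dot p q : R := complex.Re p * complex.Re q + complex.Im p * complex.Im q.

Lemma re_dotC p q : re_dot p q = re_dot q p.
Proof. by rewrite /re_dot mulrC [X in _ + X]mulrC. Qed.

Lemma normsq_ge0 z : 0 <= normsq z.
Proof. by rewrite /normsq addr_ge0 ?sqr_ge0. Qed.

Lemma normsq_real (r : R) : normsq (r%:C)%C = r ^+ 2.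
Proof. by rewrite /normsq /= expr0n addr0. Qed.

Lemma normsq0 : normsq (0 : R[i]) = 0.
Proof. by rewrite (normsq_real 0) expr0n. Qed.

Lemma normsq1 : normsq (1 : R[i]) = 1.
Proof. by rewrite (normsq_real 1) expr1n. Qed.

Lemma normsq_conj z : ((normsq z)%:C)%C = conjc z * z.
Proof.
case: z => a b; apply/eqP; rewrite eq_complex /normsq /=.
by apply/andP; split; apply/eqP; ring.
Qed.

Lemma normsq0_re_dot p q : normsq p = 0 -> re_dot p q = 0.
Proof.
case: p => a b; rewrite /normsq /re_dot /= => h.
have [-> ->] : a = 0 /\ b = 0 by split; nra.
by rewrite !mul0r addr0.
Qed.

Lemma normsqD p q : normsq (p + q) = normsq p + normsq q + 2 * re_dot p q.
Proof. by case: p => a b; case: q => c d; rewrite /normsq /re_dot /=; ring. Qed.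

Lemma normsqB_le p q : normsq (p - q) <= 2 * normsq p + 2 * normsq q.
Proof.
case: p => a b; case: q => c d; rewrite /normsq /=.
by have := sqr_ge0 (a + c); have := sqr_ge0 (b + d); nra.
Qed.

Lemma normsqB p q : normsq p - normsq q = re_dot (p - q) (p + q).
Proof. by case: p => a b; case: q => c d; rewrite /normsq /re_dot /=; ring. Qed.

Lemma re_dot_le_scaled (s : R) p q : 0 < s ->
  2 * re_dot p q <= s * normsq p + normsq q / s.
Proof.
case: p => a b; case: q => c d; rewrite /normsq /re_dot /= => s_gt0.
have -> : s * (a ^+ 2 + b ^+ 2) + (c ^+ 2 + d ^+ 2) / s
    = 2 * (a * c + b * d) + ((s * a - c) ^+ 2 + (s * b - d) ^+ 2) / s.
  by field; rewrite gt_eqF.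
by rewrite lerDl divr_ge0 ?addr_ge0 ?sqr_ge0 ?ltW.
Qed.

Lemma sqrtr_le_sqr (x y : R) : 0 <= y -> x <= y ^+ 2 -> Num.sqrt x <= y.
Proof.
move=> y_ge0 x_le; have [x_ge0|x_lt0] := lerP 0 x; last by rewrite ltr0_sqrtr.
by rewrite -[leRHS](ger0_norm y_ge0) -sqrtr_sqr ler_sqrt // (le_trans x_ge0 x_le).
Qed.

End Amplitudes.

Section PartialNorm.
Variables (R : realType) (I : finType).
Implicit Types (P : pred I) (u v : I -> R[i]).

Definition sqnorm P v : R := \sum_(i | P i) normsq (v i).
Definition vnorm P v : R := Num.sqrt (sqnorm P v).

Lemma sqnorm_ge0 P v : 0 <= sqnorm P v.
Proof. by apply: sumr_ge0 => i _; apply: normsq_ge0. Qed.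

Lemma vnorm_ge0 P v : 0 <= vnorm P v.
Proof. exact: sqrtr_ge0. Qed.

Lemma sqnorm_le_total P v : sqnorm P v <= sqnorm predT v.
Proof. by rewrite /sqnorm [leRHS](bigID P) /= lerDl sumr_ge0 // => i _; apply: normsq_ge0. Qed.

Lemma vnorm_le_total P v : vnorm P v <= vnorm predT v.
Proof. by rewrite ler_sqrt ?sqnorm_le_total ?sqnorm_ge0. Qed.

Lemma sqnorm0_re_dot P u v :
  sqnorm P u = 0 -> \sum_(i | P i) re_dot (u i) (v i) = 0.
Proof.
move/psumr_eq0P => u0; rewrite big1 // => i Pi.
by apply: normsq0_re_dot; apply: u0 => // j _; apply: normsq_ge0.
Qed.

Lemma cauchy_schwarz P u v :
  \sum_(i | P i) re_dot (u i) (v i) <= vnorm P u * vnorm P v.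
Proof.
have nn := mulr_ge0 (vnorm_ge0 P u) (vnorm_ge0 P v).
have [u0|u_neq0] := eqVneq (sqnorm P u) 0; first by rewrite sqnorm0_re_dot.
have [v0|v_neq0] := eqVneq (sqnorm P v) 0.
  by under eq_bigr do rewrite re_dotC; rewrite sqnorm0_re_dot.
have u_gt0 : 0 < vnorm P u by rewrite sqrtr_gt0 lt_def u_neq0 sqnorm_ge0.
have v_gt0 : 0 < vnorm P v by rewrite sqrtr_gt0 lt_def v_neq0 sqnorm_ge0.
pose s := vnorm P v / vnorm P u.
have scaled : 2 * \sum_(i | P i) re_dot (u i) (v i) <= s * sqnorm P u + sqnorm P v / s.
  rewrite /sqnorm mulr_sumr mulr_sumr mulr_suml -big_split /=.
  by apply: ler_sum => i _; apply: re_dot_le_scaled; rewrite divr_gt0.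
have : s * sqnorm P u + sqnorm P v / s = 2 * (vnorm P u * vnorm P v).
  rewrite -(sqr_sqrtr (sqnorm_ge0 P u)) -(sqr_sqrtr (sqnorm_ge0 P v)).
  rewrite /s -/(vnorm P u) -/(vnorm P v).
  by field; rewrite ?gt_eqF.
lra.
Qed.

Lemma vnormD P u v : vnorm P (fun i => u i + v i) <= vnorm P u + vnorm P v.
Proof.
apply: sqrtr_le_sqr; first by rewrite addr_ge0 ?vnorm_ge0.
have -> : sqnorm P (fun i => u i + v i)
    = sqnorm P u + sqnorm P v + 2 * \sum_(i | P i) re_dot (u i) (v i).
  by rewrite /sqnorm mulr_sumr -!big_split; apply: eq_bigr => i _; rewrite normsqD.
rewrite sqrrD !sqr_sqrtr ?sqnorm_ge0 //.
by have := cauchy_schwarz P u v; lra.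
Qed.

Lemma sqnormB_le P u v :
  sqnorm P u - sqnorm P v <= vnorm predT (fun i => u i - v i) * (vnorm predT u + vnorm predT v).
Proof.
rewrite -sumrB; under eq_bigr do rewrite normsqB.
apply: le_trans (cauchy_schwarz _ _ _) _.
apply: ler_pM; rewrite ?vnorm_ge0 ?vnorm_le_total //.
exact: le_trans (vnorm_le_total P _) (vnormD _ _ _).
Qed.

Lemma sqnorm_conj P v : ((sqnorm P v)%:C)%C = \sum_(i | P i) conjc (v i) * v i.
Proof. by rewrite rmorph_sum; apply: eq_bigr => i _; apply: normsq_conj. Qed.

End PartialNorm.

Section Register.
Variables (R : realType) (n m : nat).
Implicit Types (x y : {ffun 'I_n -> bool}) (v w : state R n m) (a : Idx n m).

Lemma cconjE (z : R[i]) : cconj z = conjc z.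
Proof. by case: z. Qed.

Lemma sqnorm_unitary (M : op R n m) v :
  unitary M -> sqnorm predT (apply_op M v) = sqnorm predT v.
Proof.
move=> unitM; apply: complexI; rewrite !sqnorm_conj /apply_op.
transitivity (\sum_c \sum_c' conjc (v c) * v c' * \sum_a cconj (M a c) * M a c').
  under eq_bigr => a _.
    rewrite rmorph_sum mulr_suml.
    under eq_bigr do rewrite mulr_sumr.
  over.
  rewrite exchange_big; apply: eq_bigr => c _; rewrite exchange_big.
  apply: eq_bigr => c' _; rewrite mulr_sumr; apply: eq_bigr => a _.
  by rewrite cconjE rmorphM; ring.
apply: eq_bigr => c _; under eq_bigr do rewrite unitM.
rewrite (bigD1 c) //= eqxx mulr1 big1 ?addr0 // => c'.
by rewrite eq_sym => /negbTE ->; rewrite mulr0.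
Qed.

Definition answer_flip x a : Idx n m := let: (i, b, z) := a in (i, xorb b (x i), z).

Lemma answer_flipK x : involutive (answer_flip x).
Proof. by case=> [[i b] z] /=; case: b; case: (x i). Qed.

Lemma oracleE x v a : oracle x v a = v (answer_flip x a).
Proof. by case: a => [[i b] z]. Qed.

Definition at_query (i : 'I_n) : pred (Idx n m) := fun a => a.1.1 == i.

Lemma at_query_answer_flip x i a : at_query i (answer_flip x a) = at_query i a.
Proof. by case: a => [[j b] z]. Qed.

Lemma sqnorm_oracle (P : pred (Idx n m)) x v :
  (forall a, P (answer_flip x a) = P a) -> sqnorm P (oracle x v) = sqnorm P v.
Proof.
move=> P_inv; rewrite /sqnorm [RHS](reindex_inj (inv_inj (answer_flipK x))) /=.
by apply: eq_big => [a|a _]; rewrite ?P_inv ?oracleE.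
Qed.

Lemma sqnorm_init : (0 < n)%N -> (0 < m)%N -> sqnorm predT (@init_state R n m) = 1.
Proof.
move=> n_gt0 m_gt0; pose a0 : Idx n m := (Ordinal n_gt0, false, Ordinal m_gt0).
rewrite /sqnorm (bigD1 a0) //= big1 ?addr0 => [|[[i b] z] /= a_neq0].
  exact: normsq1.
case: ifP => [/and3P[/eqP i0 b0 /eqP z0]|_]; last exact: normsq0.
by case/eqP: a_neq0; rewrite /a0; move: b0; case: b => // _; congr (_, _, _); apply: val_inj.
Qed.

Lemma vnorm_oracleB x y i0 v : (forall j, j != i0 -> x j = y j) ->
  vnorm predT (fun a => oracle x v a - oracle y v a) <= 2 * vnorm (at_query i0) v.
Proof.
move=> xy; apply: sqrtr_le_sqr; first by rewrite mulr_ge0 ?vnorm_ge0.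
rewrite exprMn sqr_sqrtr ?sqnorm_ge0 // /sqnorm (bigID (at_query i0)) /=.
rewrite [X in _ + X]big1 ?addr0 => [|[[j b] z] /= /xy xy_j]; last first.
  by rewrite xy_j subrr normsq0.
apply: le_trans (ler_sum _ (fun a _ => normsqB_le _ _)) _.
rewrite big_split /= -!mulr_sumr.
have ->: \sum_(a | at_query i0 a) normsq (oracle x v a) = sqnorm (at_query i0) v
  := sqnorm_oracle _ (at_query_answer_flip x i0).
have ->: \sum_(a | at_query i0 a) normsq (oracle y v a) = sqnorm (at_query i0) v
  := sqnorm_oracle _ (at_query_answer_flip y i0).
by rewrite -/(sqnorm (at_query i0) v); lra.
Qed.

Lemma vnorm_unitary (M : op R n m) v :
  unitary M -> vnorm predT (apply_op M v) = vnorm predT v.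
Proof. by move=> unitM; rewrite /vnorm sqnorm_unitary. Qed.

Lemma vnorm_oracle x v : vnorm predT (oracle x v) = vnorm predT v.
Proof. by rewrite /vnorm sqnorm_oracle. Qed.

Lemma apply_opB (M : op R n m) v w a :
  apply_op M v a - apply_op M w a = apply_op M (fun c => v c - w c) a.
Proof. by rewrite /apply_op -sumrB; apply: eq_bigr => c _; rewrite mulrBr. Qed.

End Register.

Section Algorithm.
Variables (R : realType) (n : nat) (A : qalg R n).
Hypothesis A_valid : valid_qalg A.
Implicit Types (x y : {ffun 'I_n -> bool}).

Lemma sqnorm_run x t : (0 < n)%N -> (t <= nq A)%N -> sqnorm predT (run R n A x t) = 1.
Proof.
case: A_valid => ws_gt0 unitA n_gt0; elim: t => [|t IHt] t_le /=.
  by rewrite sqnorm_unitary ?sqnorm_init //; apply: unitA.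
rewrite sqnorm_unitary; last exact: unitA.
by rewrite sqnorm_oracle // IHt // ltnW.
Qed.

Lemma vnorm_runB x y i0 t : (t <= nq A)%N -> (forall j, j != i0 -> x j = y j) ->
  vnorm predT (fun a => run R n A x t a - run R n A y t a) <=
  2 * \sum_(s < t) vnorm (at_query i0) (run R n A y s).
Proof.
case: A_valid => _ unitA; elim: t => [|t IHt] t_le xy /=.
  by rewrite big_ord0 mulr0 /vnorm /sqnorm big1 ?sqrtr0 // => a _; rewrite subrr normsq0.
set vx := run R n A x t; set vy := run R n A y t.
set Ut := @U R n A t.+1.
have -> : (fun a => apply_op Ut (oracle x vx) a - apply_op Ut (oracle y vy) a) =
    apply_op Ut (fun c => oracle x (fun d => vx d - vy d) c + (oracle x vy c - oracle y vy c)).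
  apply: funext => a; rewrite apply_opB; congr apply_op.
  by apply: funext => c; rewrite !oracleE; ring.
rewrite vnorm_unitary; last exact: unitA.
rewrite big_ord_recr /= mulrDr.
apply: le_trans (vnormD _ _ _) (lerD _ _); last exact: vnorm_oracleB.
by rewrite vnorm_oracle IHt // ltnW.
Qed.

Lemma prob_outNb x b : (0 < n)%N -> prob_out A x (~~ b) = 1 - prob_out A x b.
Proof.
move=> n_gt0; rewrite -(sqnorm_run x n_gt0 (leqnn _)) /prob_out /final_state /sqnorm.
rewrite [X in X - _](bigID (fun a => (a \in outS A) == b)) /= addrAC subrr add0r.
by apply: eq_bigl => a; case: (a \in outS A); case: b.
Qed.

Lemma bias_le_vnorm (f : {ffun 'I_n -> bool} -> bool) beta x y :
  (0 < n)%N -> is_bias A f beta -> f y = ~~ f x ->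
  beta <= vnorm predT (fun a => run R n A x (nq A) a - run R n A y (nq A) a).
Proof.
move=> n_gt0 [bias _] fxy.
have := sqnormB_le [pred a | (a \in outS A) == f x] (run R n A x (nq A)) (run R n A y (nq A)).
rewrite /vnorm !sqnorm_run // sqrtr1 -/(vnorm _ _).
have := bias x; have := bias y; rewrite fxy prob_outNb //.
by rewrite /prob_out /final_state /sqnorm /=; lra.
Qed.

End Algorithm.

Section Flip.
Variable n : nat.
Implicit Types (y : {ffun 'I_n -> bool}) (i j : 'I_n).

Definition flip y i : {ffun 'I_n -> bool} := [ffun j => if j == i then ~~ y j else y j].

Definition sensitive (f : {ffun 'I_n -> bool} -> bool) y : {set 'I_n} :=
  [set i | f (flip y i) != f y].

Lemma flip_at y i : flip y i i = ~~ y i.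
Proof. by rewrite ffunE eqxx. Qed.

Lemma flip_other y i j : j != i -> flip y i j = y j.
Proof. by rewrite ffunE => /negbTE ->. Qed.

Lemma flipK y i : flip (flip y i) i = y.
Proof. by apply/ffunP => j; rewrite !ffunE; case: eqP => // ->; rewrite negbK. Qed.

End Flip.

Section Adversary.
Variables (R : realType) (n : nat).

Lemma sum_sqnorm_at_query m (v : state R n m) :
  \sum_i sqnorm (at_query i) v = sqnorm predT v.
Proof. by rewrite /sqnorm (partition_big (fun a : Idx n m => a.1.1) predT). Qed.

Lemma sum_vnorm_at_query_le m (J : {set 'I_n}) (v : state R n m) :
  sqnorm predT v = 1 -> \sum_(i in J) vnorm (at_query i) v <= Num.sqrt #|J|%:R.
Proof.
move=> v1; pose u i := ((vnorm (at_query i) v)%:C)%C.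
have u_le1 : vnorm (fun i => i \in J) u <= 1.
  rewrite /vnorm -sqrtr1 ler_sqrt ?ler01 //.
  have -> : sqnorm (fun i => i \in J) u = \sum_(i in J) sqnorm (at_query i) v.
    by apply: eq_bigr => i _; rewrite normsq_real sqr_sqrtr ?sqnorm_ge0.
  rewrite -v1 -sum_sqnorm_at_query [leRHS](bigID (fun i => i \in J)) /=.
  by rewrite lerDl sumr_ge0 // => i _; apply: sqnorm_ge0.
have vnorm1 : vnorm (fun i => i \in J) (fun=> 1 : R[i]) = Num.sqrt #|J|%:R.
  by rewrite /vnorm /sqnorm (eq_bigr (fun=> 1)) ?sumr_const // => i _; apply: normsq1.
have -> : \sum_(i in J) vnorm (at_query i) v = \sum_(i in J) re_dot (u i) 1.
  by apply: eq_bigr => i _; rewrite /re_dot /= mulr1 mul0r addr0.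
apply: le_trans (cauchy_schwarz _ _ _) _.
by rewrite vnorm1 -[leRHS]mul1r ler_wpM2r ?sqrtr_ge0.
Qed.

Lemma bias_mul_card_sensitive_le (A : qalg R n) f beta y :
  (0 < n)%N -> valid_qalg A -> is_bias A f beta ->
  beta * #|sensitive f y|%:R <= 2 * (nq A)%:R * Num.sqrt #|sensitive f y|%:R.
Proof.
move=> n_gt0 A_valid biasA; set S := sensitive f y.
have bias_le i : i \in S -> beta <= 2 * \sum_(s < nq A) vnorm (at_query i) (run R n A y s).
  rewrite inE => fi; apply: le_trans _ (vnorm_runB A_valid (leqnn _) (@flip_other _ y i)).
  by apply: (bias_le_vnorm A_valid n_gt0 biasA); move: fi; case: (f y); case: (f (flip y i)).
rewrite mulr_natr -(sumr_const (mem S)) -mulrA.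
apply: le_trans (ler_sum _ bias_le) _.
rewrite -mulr_sumr ler_wpM2l // exchange_big /=.
apply: le_trans (ler_sum _ (fun s _ => sum_vnorm_at_query_le S
  (sqnorm_run A_valid y n_gt0 (ltnW (ltn_ord s))))) _.
by rewrite sumr_const card_ord mulr_natl.
Qed.

End Adversary.

Section LogBound.
Variable R : realType.

Lemma bias_sqr_le (beta : R) (N J T : nat) : 0 <= beta -> (N <= J.*2)%N ->
  beta * J%:R <= 2 * T%:R * Num.sqrt J%:R -> beta ^+ 2 * N%:R <= 8 * T%:R ^+ 2.
Proof.
move=> beta_ge0 NJ bJ; have [J0|J_gt0] := posnP J.
  by move: NJ; rewrite J0 leqn0 => /eqP ->; rewrite mulr0 mulr_ge0 ?sqr_ge0.
set s := Num.sqrt (J%:R : R); have s_gt0 : 0 < s by rewrite sqrtr_gt0 ltr0n.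
have J_sqr : J%:R = s ^+ 2 :> R by rewrite sqr_sqrtr ?ler0n.
have bs : beta * s <= 2 * T%:R by rewrite -(ler_pM2r s_gt0) -mulrA -expr2 -J_sqr.
have bs_ge0 : 0 <= beta * s by rewrite mulr_ge0 // ltW.
have bs2 := ler_pM bs_ge0 bs_ge0 bs bs.
have NJR : N%:R <= 2 * J%:R :> R by rewrite -natrM ler_nat mul2n.
have := ler_wpM2l (sqr_ge0 beta) NJR.
by move: bs2; rewrite J_sqr; nra.
Qed.

Lemma log2_bound (beta : R) (N T : nat) : 0 < beta -> (0 < N)%N ->
  beta ^+ 2 * N%:R <= 8 * T%:R ^+ 2 -> log2 N%:R / 2 - 3 <= T%:R + log2 (1 / (2 * beta)).
Proof.
move=> beta_gt0 N_gt0 bN; have ln2_gt0 : 0 < ln (2 : R) by rewrite ln_gt0 ?ltr1n.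
have T_le : T%:R <= 2 ^+ T :> R by rewrite -natrX ler_nat ltnW // ltn_expl.
have ln_le : ln (beta ^+ 2 * N%:R) <= ln (8 * (2 ^+ T) ^+ 2).
  rewrite ler_ln ?posrE ?mulr_gt0 ?exprn_gt0 ?ltr0n //; apply: le_trans bN _.
  by apply: ler_wpM2l => //; rewrite ler_sqr ?nnegrE ?exprn_ge0 ?ler0n.
have e8 : 8 = 2 ^+ 3 :> R by rewrite -natrX.
move: ln_le; rewrite e8 !lnM ?posrE ?exprn_gt0 ?ltr0n // lnXn // => ln_le.
have log2_le : (ln beta + ln beta + ln N%:R) / ln 2 <= 2 * T%:R + 3.
  rewrite ler_pdivrMr //.
  set L := ln (2 : R) in ln_le *.
  have -> : (2 * T%:R + 3) * L = L + (L + L) + (L *+ T + L *+ T).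
    by rewrite -mulr_natr; ring.
  exact: ln_le.
have -> : log2 (1 / (2 * beta)) = -1 - ln beta / ln 2.
  by rewrite /log2 div1r lnV ?posrE ?mulr_gt0 // lnM ?posrE //; field; rewrite gt_eqF.
move: log2_le; rewrite /log2 !mulrDl; lra.
Qed.

End LogBound.

Section SymmetricFunctions.
Variable n : nat.
Implicit Types (x y : {ffun 'I_n -> bool}) (f : {ffun 'I_n -> bool} -> bool).

Lemma hamming_weight_le x : (hamming_weight x <= n)%N.
Proof. by rewrite -[leqRHS]card_ord max_card. Qed.

Lemma card_zeros x : (#|[pred j | ~~ x j]| + hamming_weight x)%N = n.
Proof. by rewrite addnC -[RHS]card_ord -(cardC [pred j | x j]). Qed.

Lemma hamming_weight_flip0 x i : x i = false ->
  hamming_weight (flip x i) = (hamming_weight x).+1.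
Proof.
move=> xi; rewrite /hamming_weight.
have -> : #|[pred j | flip x i j]| = #|[predU1 i & [pred j | x j]]|.
  by apply: eq_card => j; rewrite !inE ffunE; case: eqP => [->|]; rewrite ?xi.
by rewrite cardU1 inE xi.
Qed.

Lemma hamming_weight_flip1 x i : x i ->
  (hamming_weight (flip x i)).+1 = hamming_weight x.
Proof.
by move=> xi; rewrite -[in RHS](flipK x i) (@hamming_weight_flip0 (flip x i)) ?flip_at ?xi.
Qed.

Definition unary_word k : {ffun 'I_n -> bool} := [ffun j : 'I_n => (j < k)%N].

Lemma hamming_weight_unary k : (k <= n)%N -> hamming_weight (unary_word k) = k.
Proof.
elim: k => [|k IHk] k_le; first by apply: eq_card0 => j; rewrite inE ffunE.
have -> : unary_word k.+1 = flip (unary_word k) (Ordinal k_le).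
  apply/ffunP => j; rewrite !ffunE ltnS leq_eqVlt -(inj_eq val_inj) /=.
  by case: eqP => [->|]; rewrite ?ltnn.
by rewrite hamming_weight_flip0 ?ffunE ?ltnn // IHk // ltnW.
Qed.

Lemma symmetric_jump f : symmetric_fun f -> (exists x y, f x != f y) ->
  exists2 k, (k < n)%N & f (unary_word k.+1) = ~~ f (unary_word k).
Proof.
move=> f_sym [x [y fxy]].
have fE z : f z = f (unary_word (hamming_weight z)).
  by apply: f_sym; rewrite hamming_weight_unary ?hamming_weight_le.
have [/existsP[k jump]|/existsPn const] :=
  boolP [exists k : 'I_n, f (unary_word k.+1) != f (unary_word k)].
  by exists k => //; move: jump; case: (f (unary_word k.+1)); case: (f (unary_word k)).
have f0 k : (k <= n)%N -> f (unary_word k) = f (unary_word 0).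
  elim: k => [//|k IHk] k_lt; rewrite -IHk; last exact: ltnW.
  by apply/eqP; have := const (Ordinal k_lt); rewrite negbK.
by move: fxy; rewrite fE (fE y) !f0 ?hamming_weight_le ?eqxx.
Qed.

Lemma card_le_sensitive f y (Z : {pred 'I_n}) :
  {in Z, forall j, f (flip y j) != f y} -> (#|Z| <= #|sensitive f y|)%N.
Proof. by move=> Zs; apply/subset_leq_card/fintype.subsetP => j /Zs; rewrite inE. Qed.

Lemma symmetric_sensitivity f : symmetric_fun f -> (exists x y, f x != f y) ->
  exists y, (n <= #|sensitive f y|.*2)%N.
Proof.
move=> f_sym /(symmetric_jump f_sym) [k k_lt jump].
have fE z : f z = f (unary_word (hamming_weight z)).
  by apply: f_sym; rewrite hamming_weight_unary ?hamming_weight_le.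
have [small|large] := leqP k.*2.+1 n.
  have wk : hamming_weight (unary_word k) = k by rewrite hamming_weight_unary // ltnW.
  exists (unary_word k); have := card_zeros (unary_word k); rewrite wk.
  suff : (#|[pred j | ~~ unary_word k j]| <= #|sensitive f (unary_word k)|)%N by lia.
  apply: card_le_sensitive => j /negbTE yj.
  by rewrite (fE (flip _ j)) hamming_weight_flip0 // wk jump; case: (f _).
have wk : hamming_weight (unary_word k.+1) = k.+1 by rewrite hamming_weight_unary.
exists (unary_word k.+1); move: wk; rewrite /hamming_weight.
suff : (#|[pred j | unary_word k.+1 j]| <= #|sensitive f (unary_word k.+1)|)%N by lia.
apply: card_le_sensitive => j yj.
have [wflip] : (hamming_weight (flip (unary_word k.+1) j)).+1 = k.+1.
  by rewrite hamming_weight_flip1 // hamming_weight_unary.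
by rewrite (fE (flip _ j)) wflip jump; case: (f _).
Qed.

End SymmetricFunctions.

Theorem mainTheorem11 (R : realType) :
  exists C : R,
    forall (n : nat) (f : {ffun 'I_n -> bool} -> bool),
      (1 <= n)%N ->
      symmetric_fun f ->
      (exists x y, f x != f y) ->
      forall (A : qalg R n) (beta : R),
        valid_qalg A -> 0 < beta -> is_bias A f beta ->
        log2 (n%:R : R) / 2 - C <= wu_cost A beta.
Proof.
exists 3 => n f n_gt0 f_sym f_nonconst A beta A_valid beta_gt0 biasA.
have [y sens] := symmetric_sensitivity f_sym f_nonconst.
apply: log2_bound => //; apply: bias_sqr_le (ltW beta_gt0) sens _.
exact: bias_mul_card_sensitive_le.
Qed.
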